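(* Let $D$ be a tournament missing disjoint paths of length 2 and let $C=a_1b_1c_1,\dots,a_kb_kc_k$ be a double cycle in $\Delta(D)$. Then for all $i\in\{1,\dots,k\}$, with $H=D[K(C)]$: (1) $N^+_H(a_i)\setminus\{c_i\}=N^+_H(c_i)\setminus\{a_i\}$; (2) $N^-_H(a_i)\setminus\{c_i\}=N^-_H(c_i)\setminus\{a_i\}$.
   Context: All digraphs are finite oriented graphs; $D[X]$ is the induced subdigraph. $N^+_H(v)$, $N^-_H(v)$ are out/in-neighborhoods in $H$; $N^{++}(v)$ (in $D$) is the set of vertices $w\notin N^+(v)\cup\{v\}$ with $u\to w$ for some $u\in N^+(v)$. A missing edge is a pair of distinct non-adjacent vertices; the missing graph is formed by the missing edges. $D$ is a tournament missing disjoint paths of length 2 if its missing graph is a vertex-disjoint union of paths each with exactly two edges. For missing edges $\{x,y\},\{a,b\}$, $\{x,y\}$ loses to $\{a,b\}$ (written $xy\to ab$) if the endpoints can be labelled so that $x\to a$, $b\notin N^+(x)\cup N^{++}(x)$, $y\to b$, $a\notin N^+(y)\cup N^{++}(y)$. $\Delta(D)$ has the missing edges as vertices and arcs $(e,e')$ whenever $e$ loses to $e'$. For missing paths $abc$, $xyz$, $abc\to xyz$ means each of $ab,bc$ loses to each of $xy,yz$. A double cycle is a sequence $C=a_1b_1c_1,\dots,a_kb_kc_k$ ($k\ge2$) of distinct missing paths of length 2 (components of the missing graph, edges $a_ib_i,b_ic_i$) with $a_ib_ic_i\to a_{i+1}b_{i+1}c_{i+1}$ for all $i$, indices modulo $k$.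 $K(C)=\{a_i,b_i,c_i:1\le i\le k\}$. *)

From mathcomp Require Import all_boot.
Set Implicit Arguments. Unset Strict Implicit. Unset Printing Implicit Defensive.

Section Digraphs.
Variables (V : finType) (arc : rel V).

Definition oriented : Prop :=
  (forall x, ~~ arc x x) /\ (forall x y, arc x y -> ~~ arc y x).

Definition outN (v : V) : {set V} := [set w | arc v w].
Definition inN (v : V) : {set V} := [set w | arc w v].
Definition outN2 (v : V) : {set V} :=
  [set w | (w \notin outN v) && (w != v) && [exists u, arc v u && arc u w]].

Definition missing (x y : V) : bool := (x != y) && ~~ arc x y && ~~ arc y x.

Definition missN (v : V) : {set V} := [set w | missing v w].

Definition missing_path (a b c : V) : Prop :=
  [/\ a != c, missN b = [set a; c], missN a = [set b] & missN c = [set b]].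

(* D is a tournament missing disjoint paths of length 2: every component of
   the missing graph is a path with exactly two edges *)
Definition tourn_missing_P2 : Prop :=
  oriented /\
  forall x y, missing x y -> exists a b c, missing_path a b c /\
     ((x == a) && (y == b) || (x == b) && (y == a) ||
      (x == b) && (y == c) || (x == c) && (y == b)).

Definition loses_lab (x y a b : V) : bool :=
  [&& arc x a, b \notin outN x :|: outN2 x, arc y b & a \notin outN y :|: outN2 y].

Definition loses (x y a b : V) : bool :=
  [&& missing x y, missing a b &
  [|| loses_lab x y a b, loses_lab y x a b, loses_lab x y b a | loses_lab y x b a]].

Definition path_loses (a b c x y z : V) : bool :=
  [&& loses a b x y, loses a b y z, loses b c x y & loses b c y z].

(* C = a_0 b_0 c_0, ..., a_{k-1} b_{k-1} c_{k-1} (indices mod k) is a double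
   cycle: k >= 2 distinct missing paths of length 2 (components of the
   missing graph), consecutive ones losing *)
Definition double_cycle (k : nat) (a b c : nat -> V) : Prop :=
  [/\ 2 <= k,
      forall i, i < k -> missing_path (a i) (b i) (c i),
      forall i j, i < k -> j < k -> [set a i; b i; c i] = [set a j; b j; c j] -> i = j
    & forall i, i < k -> path_loses (a i) (b i) (c i)
                                  (a (i.+1 %% k)) (b (i.+1 %% k)) (c (i.+1 %% k))].

Definition KC (k : nat) (a b c : nat -> V) : {set V} :=
  [set v | [exists i : 'I_k, (v == a i) || (v == b i) || (v == c i)]].

Definition outN_in (X : {set V}) (v : V) : {set V} := X :&: outN v.
Definition inN_in (X : {set V}) (v : V) : {set V} := X :&: inN v.

End Digraphs.

(* Between two consecutive paths of a double cycle the four losses force every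
   arc: its direction depends only on which endpoints are middle vertices, up to
   one twist bit per step, and every backward arc lies on no directed triangle.
   Give each vertex, reading the paths from P_i on, the level "is a middle
   vertex" plus the twists accumulated since P_i; backward arcs then join exactly
   the vertices of equal level.  So an arc x -> v out of P_i propagates along the
   vertices of level(x) up to the path of v, forcing level(v) <> level(x), and
   dually for an arc v -> z into P_i.  The total twist around the cycle is odd
   (otherwise the level-0 vertices would close a backward walk through P_i), so
   a_i and c_i have level 0 leaving P_i and level 1 returning to it: there is no
   path a_i -> v -> c_i or c_i -> v -> a_i.  As every vertex v of another path is
   adjacent to both ends, a_i and c_i see it in the same direction, while b_i is
   adjacent to neither. *)

From mathcomp Require Import all_boot zify.
Set Implicit Arguments. Unset Strict Implicit. Unset Printing Implicit Defensive.

Definition adjacent (V : finType) (arc : rel V) (x y : V) : bool :=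
  arc x y || arc y x.

Definition no_path2 (V : finType) (arc : rel V) (x y : V) : Prop :=
  forall u, arc x u -> arc u y -> False.

Lemma arc_propagate (V : finType) (arc : rel V) (X : nat -> V) v d :
  (forall n, n.+1 < d -> arc (X n.+1) (X n) /\ no_path2 arc (X n) (X n.+1)) ->
  (forall n, 0 < n < d -> adjacent arc (X n) v) ->
  arc (X 0) v -> forall n, n < d -> arc (X n) v.
Proof.
move=> step adj X0v; elim=> [//|n IH] hn.
have [_ np] := step n hn.
have /orP[//|vXn1] := adj n.+1 hn.
by case: (np v (IH (ltnW hn)) vXn1).
Qed.

Lemma arc_propagate_back (V : finType) (arc : rel V) (Z : nat -> V) v d K :
  (forall n, d <= n < K -> arc (Z n.+1) (Z n) /\ no_path2 arc (Z n) (Z n.+1)) ->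
  (forall n, d < n < K -> adjacent arc v (Z n)) ->
  arc v (Z K) -> forall n, d < n <= K -> arc v (Z n).
Proof.
move=> step adj vZK n hn; have -> : n = K - (K - n) by lia.
apply: (@arc_propagate V (fun x y => arc y x) (fun m => Z (K - m)) v (K - d));
  [move=> m hm | move=> m hm; apply: adj; lia | by rewrite subn0 | lia].
have -> : K - m = (K - m.+1).+1 by lia.
have [Zarc np] := step (K - m.+1) ltac:(lia).
by split=> // u h1 h2; apply: np h2 h1.
Qed.

Section Orientation.
Variables (V : finType) (arc : rel V).

Lemma missingC x y : missing arc x y = missing arc y x.
Proof. by rewrite /missing eq_sym andbAC. Qed.

Lemma losesCl x y p q : loses arc x y p q = loses arc y x p q.
Proof.
rewrite /loses missingC; congr [&& _, _ & _].
by case: loses_lab; case: loses_lab; case: loses_lab; case: loses_lab.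
Qed.

Lemma losesCr x y p q : loses arc x y p q = loses arc x y q p.
Proof.
rewrite /loses (missingC p); congr [&& _, _ & _].
by case: loses_lab; case: loses_lab; case: loses_lab; case: loses_lab.
Qed.

Hypothesis Ho : oriented arc.

Lemma arc_asym x y : arc x y -> arc y x = false.
Proof. by move/(Ho.2 x y)/negbTE. Qed.

Lemma arc_flip x y : adjacent arc x y -> arc y x = ~~ arc x y.
Proof. by case/orP=> [xy | yx]; rewrite ?xy ?yx ?(arc_asym xy) ?(arc_asym yx). Qed.

Lemma loses_lab_cycle x y p q :
  missing arc p q -> loses_lab arc x y p q ->
  adjacent arc x q -> adjacent arc y p ->
  [/\ arc x p, arc p y, arc y q & arc q x] /\ no_path2 arc x q /\ no_path2 arc y p.
Proof.
case/andP=> /andP[_ npq] nqp /and4P[xp qfar yq pfar] adjxq adjyp.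
have qx : q != x by apply: contraNneq nqp => ->.
have py : p != y by apply: contraNneq npq => ->.
move: qfar pfar; rewrite !inE !negb_or qx py /= !andbT.
case/andP=> nxq; rewrite nxq => /existsPn nq2 /andP[nyp]; rewrite nyp => /existsPn np2.
move: adjxq adjyp; rewrite /adjacent (negbTE nxq) (negbTE nyp) /= => qx' py'.
split=> //; split=> u h1 h2; [by have := nq2 u; rewrite h1 h2 | by have := np2 u; rewrite h1 h2].
Qed.

(* The four arcs between the two missing edges form a directed 4-cycle. *)
Lemma loses_square x y p q : loses arc x y p q ->
  (forall u w, u \in [:: x; y] -> w \in [:: p; q] -> adjacent arc u w) ->
  forall u w, u \in [:: x; y] -> w \in [:: p; q] ->
  arc w u = ((w == q) == (u == y)) (+) arc y q /\ (arc w u -> no_path2 arc u w).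
Proof.
case/and3P=> mxy mpq lab adj.
have nxy : x != y by case/andP: mxy => /andP[].
have npq : p != q by case/andP: mpq => /andP[].
have mqp : missing arc q p by rewrite missingC.
have xin := mem_head x [:: y]; have yin := mem_last x [:: y].
have pin := mem_head p [:: q]; have qin := mem_last p [:: q].
have [[[h1 h2 h3 h4] [n1 n2]] | [[h1 h2 h3 h4] [n1 n2]]] :
    ([/\ arc x p, arc p y, arc y q & arc q x] /\ no_path2 arc x q /\ no_path2 arc y p) \/
    ([/\ arc y p, arc p x, arc x q & arc q y] /\ no_path2 arc y q /\ no_path2 arc x p).
  case/or4P: lab => /loses_lab_cycle cyc.
  - by left; apply: cyc; rewrite ?adj.
  - by right; apply: cyc; rewrite ?adj.
  - by have [[? ? ? ?] [? ?]] := cyc mqp (adj _ _ xin pin) (adj _ _ yin qin); right.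
  - by have [[? ? ? ?] [? ?]] := cyc mqp (adj _ _ yin pin) (adj _ _ xin qin); left.
all: move=> u w; rewrite !inE => /orP[]/eqP-> /orP[]/eqP->;
  rewrite ?eqxx ?(negbTE nxy) ?(negbTE npq) ?h1 ?h2 ?h3 ?h4
    ?(arc_asym h1) ?(arc_asym h2) ?(arc_asym h3) ?(arc_asym h4); by split.
Qed.

Lemma path_loses_arc A B C A' B' C' :
  path_loses arc A B C A' B' C' ->
  (forall u w, u \in [:: A; B; C] -> w \in [:: A'; B'; C'] -> adjacent arc u w) ->
  forall x y, x \in [:: A; B; C] -> y \in [:: A'; B'; C'] ->
  arc y x = ((y == B') == (x == B)) (+) arc B B' /\ (arc y x -> no_path2 arc x y).
Proof.
case/and4P=> lAA lAC lCA lCC adj x y hx hy.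
have split3 (T : eqType) (s t m : T) z : z \in [:: s; m; t] ->
    exists2 z0, z0 \in [:: s; t] & z \in [:: z0; m].
  by rewrite !inE => /or3P[]/eqP->; [exists s | exists s | exists t];
    rewrite !inE ?eqxx ?orbT.
have sub3 (T : eqType) (s t m z0 z : T) :
    z0 \in [:: s; t] -> z \in [:: z0; m] -> z \in [:: s; m; t].
  by rewrite !inE => /orP[]/eqP-> /orP[]/eqP->; rewrite eqxx ?orbT.
have [x0 hx0 hxx0] := split3 _ _ _ _ _ hx.
have [y0 hy0 hyy0] := split3 _ _ _ _ _ hy.
(* Up to symmetry, each of the four losses has the shape x0 B -> y0 B'. *)
have sq : loses arc x0 B y0 B'.
  move: hx0 hy0; rewrite !inE => /orP[]/eqP-> /orP[]/eqP->;
    [exact: lAA | rewrite losesCr | rewrite losesCl | rewrite losesCl losesCr] => //.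
apply: (loses_square sq) => // u w hu hw.
by apply: adj; [apply: (sub3 _ _ _ _ x0) | apply: (sub3 _ _ _ _ y0)].
Qed.

End Orientation.

(* The component of x when the missing graph is a union of paths with two edges. *)
Definition miss_comp (V : finType) (arc : rel V) (x : V) : {set V} :=
  x |: (missN arc x :|: \bigcup_(w in missN arc x) missN arc w).

Lemma missing_path_comp (V : finType) (arc : rel V) a b c x :
  missing_path arc a b c -> x \in [:: a; b; c] -> miss_comp arc x = [set a; b; c].
Proof.
case=> _ hb ha hc; rewrite !inE => /or3P[]/eqP->; rewrite /miss_comp ?ha ?hb ?hc
  ?bigcup_setU ?big_set1 ?ha ?hb ?hc; apply/setP=> z; rewrite !inE;
  by case: (z == a); case: (z == b); case: (z == c).
Qed.

Lemma missing_path_edges (V : finType) (arc : rel V) a b c :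
  missing_path arc a b c -> missing arc a b /\ missing arc b c.
Proof.
by case=> _ hb ha _; split; [move/setP: ha => /(_ b) | move/setP: hb => /(_ c)];
  rewrite !inE eqxx ?orbT.
Qed.

Lemma addn_mod_neq k i n d : n < d -> d - n < k -> (i + n) %% k != (i + d) %% k.
Proof.
move=> nd dnk; rewrite eqn_modDl eq_sym eqn_mod_dvd; last exact: ltnW.
by apply/negP => /dvdn_leq; rewrite subn_gt0 => /(_ nd); lia.
Qed.

Section DoubleCycle.
Variables (V : finType) (arc : rel V) (k : nat) (a b c : nat -> V).
Hypotheses (Ho : oriented arc) (DC : double_cycle arc k a b c).

(* Indices are read modulo k, so the cycle can be walked with unbounded indices. *)
Definition block m := [:: a (m %% k); b (m %% k); c (m %% k)].
Definition mid m := b (m %% k).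
Definition twist m := arc (mid m) (mid m.+1).

Lemma k_gt1 : 1 < k.
Proof. by case: DC. Qed.

Lemma block_missing_path m : missing_path arc (a (m %% k)) (b (m %% k)) (c (m %% k)).
Proof. by case: DC => k2 mp _ _; apply: mp; rewrite ltn_pmod // ltnW. Qed.

Lemma block_ends m : a (m %% k) != mid m /\ c (m %% k) != mid m.
Proof.
have [/andP[/andP[ab _] _] /andP[/andP[bc _] _]] := missing_path_edges (block_missing_path m).
by rewrite eq_sym in bc.
Qed.

Lemma blocks_adjacent m n x y :
  m %% k != n %% k -> x \in block m -> y \in block n -> adjacent arc x y.
Proof.
move=> mn hx hy; apply: contraNT mn => nadj.
have [compm compn] := (missing_path_comp (block_missing_path m) hx,
                       missing_path_comp (block_missing_path n) hy).
have hym : y \in block m.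
  have : y \in miss_comp arc x.
    rewrite /miss_comp !inE; have [->|xy] := eqVneq y x; rewrite ?eqxx //.
    rewrite /missing (eq_sym x) xy /=.
    by move: nadj; rewrite /adjacent negb_or => ->.
  by rewrite compm !inE -orbA.
case: DC => k2 _ inj _; apply/eqP/inj; rewrite ?ltn_pmod ?(ltnW k2) //.
by rewrite -(missing_path_comp (block_missing_path m) hym) compn.
Qed.

Lemma consecutive_blocks m x y : x \in block m -> y \in block m.+1 ->
  arc y x = ((y == mid m.+1) == (x == mid m)) (+) twist m /\ (arc y x -> no_path2 arc x y).
Proof.
move=> hx hy.
have adj u w : u \in block m -> w \in block m.+1 -> adjacent arc u w.
  move=> hu hw; apply: (blocks_adjacent _ hu hw).
  by have := @addn_mod_neq k m 0 1; rewrite addn0 addn1 subn0 k_gt1; apply.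
have e : m.+1 %% k = (m %% k).+1 %% k by rewrite -addn1 -modnDml addn1.
move: hy adj; rewrite /block /twist /mid e => hy adj.
have mk : m %% k < k by rewrite ltn_pmod // ltnW // k_gt1.
by case: DC => _ _ _ pl; apply: (path_loses_arc Ho (pl _ mk)).
Qed.

Variable i : nat.

Definition parity n := \big[addb/false]_(i <= m < i + n) twist m.

Definition level n x := (x == mid (i + n)) (+) parity n.

Definition rep n s := if s (+) parity n then mid (i + n) else a ((i + n) %% k).

Lemma parity0 : parity 0 = false.
Proof. by rewrite /parity addn0 big_geq. Qed.

Lemma parityS n : parity n.+1 = parity n (+) twist (i + n).
Proof. by rewrite /parity addnS big_nat_recr // leq_addr. Qed.

Lemma level_wrap x : level k x = level 0 x (+) parity k.
Proof. by rewrite /level /mid addn0 modnDr parity0 addbF. Qed.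

Lemma rep_in n s : rep n s \in block (i + n).
Proof. by rewrite /rep /block /mid; case: ifP; rewrite !inE eqxx ?orbT. Qed.

Lemma level_rep n s : level n (rep n s) = s.
Proof.
rewrite /level /rep; case: ifP; rewrite ?eqxx ?(negbTE (block_ends _).1);
  by case: s; case: (parity n).
Qed.

Lemma level_arc n x y : x \in block (i + n) -> y \in block (i + n.+1) ->
  arc y x = (level n.+1 y == level n x) /\ (arc y x -> no_path2 arc x y).
Proof.
rewrite addnS => hx hy; have [-> np] := consecutive_blocks hx hy; split=> //.
rewrite /level parityS addnS.
by move: (y == _) (x == _) (parity n) (twist _) => [] [] [] [].
Qed.

Lemma level_step n x y : x \in block (i + n) -> y \in block (i + n.+1) ->
  level n.+1 y = level n x -> arc y x /\ no_path2 arc x y.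
Proof.
move=> hx hy e; have [arcE np] := level_arc hx hy.
have yx : arc y x by rewrite arcE e.
by split=> //; apply: np.
Qed.

Lemma level_neq n x y : x \in block (i + n) -> y \in block (i + n.+1) ->
  arc x y -> level n.+1 y != level n x.
Proof. by move=> hx hy xy; rewrite -(level_arc hx hy).1 (arc_asym Ho xy). Qed.

Lemma level_out x v d : x \in block i -> v \in block (i + d) -> 0 < d < k ->
  arc x v -> level d v != level 0 x.
Proof.
move=> hx hv /andP[d0 dk] xv.
pose X n := if n is 0 then x else rep n (level 0 x).
have hX n : X n \in block (i + n) /\ level n (X n) = level 0 x.
  by case: n => [|n]; rewrite /X ?addn0 ?rep_in ?level_rep.
have step n : arc (X n.+1) (X n) /\ no_path2 arc (X n) (X n.+1).
  by apply: level_step (hX n).1 (hX n.+1).1 _; rewrite (hX n).2 (hX n.+1).2.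
have adj n : 0 < n < d -> adjacent arc (X n) v.
  move=> /andP[n0 nd]; apply: (blocks_adjacent _ (hX n).1 hv).
  by apply: addn_mod_neq => //; lia.
have Xv : arc (X d.-1) v by apply: (arc_propagate (fun n _ => step n) adj xv); lia.
have hv' : v \in block (i + d.-1.+1) by rewrite prednK.
by have := level_neq (hX d.-1).1 hv' Xv; rewrite (hX _).2 prednK.
Qed.

Lemma level_in z v d : z \in block (i + k) -> v \in block (i + d) -> d < k ->
  arc v z -> level d v != level k z.
Proof.
move=> hz hv dk vz.
pose Z n := if n == k then z else rep n (level k z).
have hZ n : Z n \in block (i + n) /\ level n (Z n) = level k z.
  by rewrite /Z; case: eqP => [->|_]; rewrite ?rep_in ?level_rep.
have step n : arc (Z n.+1) (Z n) /\ no_path2 arc (Z n) (Z n.+1).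
  by apply: level_step (hZ n).1 (hZ n.+1).1 _; rewrite (hZ n).2 (hZ n.+1).2.
have adj n : d < n < k -> adjacent arc v (Z n).
  move=> /andP[dn nk]; apply: (blocks_adjacent _ hv (hZ n).1).
  by apply: addn_mod_neq => //; lia.
have vZ : arc v (Z d.+1).
  by apply: (arc_propagate_back (fun n _ => step n) adj); rewrite ?ltnSn /Z ?eqxx.
by have := level_neq hv (hZ d.+1).1 vZ; rewrite (hZ _).2 eq_sym.
Qed.

Lemma parity_odd : parity k.
Proof.
apply/idPn => pk.
have hz : rep 0 false \in block (i + k) by rewrite /block modnDr -[i]addn0 rep_in.
have e : level 1 (rep 1 false) = level 0 (rep 0 false) by rewrite !level_rep.
have [vz _] := level_step (rep_in 0 false) (rep_in 1 false) e.
by have := level_in hz (rep_in 1 false) k_gt1 vz; rewrite level_wrap !level_rep (negbTE pk).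
Qed.

Lemma no_path_across x z v d :
  x \in block i -> z \in block i -> x != mid i -> z != mid i ->
  v \in block (i + d) -> 0 < d < k -> arc x v -> arc v z -> False.
Proof.
move=> hx hz nx nz hv hd xv vz.
have end0 w : w != mid i -> level 0 w = false.
  by rewrite /level addn0 parity0 addbF => /negbTE.
have hz' : z \in block (i + k) by rewrite /block modnDr.
have := level_out hx hv hd xv.
have := level_in hz' hv (proj2 (andP hd)) vz.
by rewrite level_wrap parity_odd !end0 //; case: (level d v).
Qed.

Lemma same_side x z w d :
  x \in block i -> z \in block i -> x != mid i -> z != mid i ->
  w \in block (i + d) -> 0 < d < k ->
  arc x w = arc z w /\ arc w x = arc w z.
Proof.
move=> hx hz nx nz hw hd.
have adj y : y \in block i -> adjacent arc y w.
  move=> hy; apply: (blocks_adjacent _ hy hw); rewrite -[i in i %% k]addn0.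
  by case/andP: hd => d0 dk; apply: addn_mod_neq; rewrite ?subn0.
have to_w y y' : y \in block i -> y' \in block i -> y != mid i -> y' != mid i ->
    arc y w -> arc y' w.
  move=> hy hy' ny ny' yw; have /orP[//|wy'] := adj _ hy'.
  by case: (no_path_across hy hy' ny ny' hw hd yw wy').
have xz : arc x w = arc z w by apply/idP/idP; apply: to_w.
by rewrite (arc_flip Ho (adj _ hx)) (arc_flip Ho (adj _ hz)) xz.
Qed.

Lemma KC_block_offset w : i < k -> w \in KC k a b c -> w \notin block i ->
  exists2 d, 0 < d < k & w \in block (i + d).
Proof.
move=> ik; rewrite inE => /existsP[j hj] wi.
have hw : w \in block (i + (j + (k - i)) %% k).
  rewrite /block modnDmr (_ : i + _ = j + k); last by have := ltn_ord j; lia.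
  by rewrite modnDr modn_small // !inE -orbA in hj *.
exists ((j + (k - i)) %% k) => //; rewrite ltn_pmod ?andbT; last by rewrite ltnW ?k_gt1.
by rewrite lt0n; apply: contraNneq wi => d0; rewrite d0 addn0 in hw.
Qed.

Lemma ends_same_side w : i < k -> w \in KC k a b c -> w != a i -> w != c i ->
  arc (a i) w = arc (c i) w /\ arc w (a i) = arc w (c i).
Proof.
move=> ik wH wa wc; have imod : i %% k = i by rewrite modn_small.
have := block_missing_path i; rewrite imod => mp.
have [na nc] := block_ends i; rewrite /mid imod in na nc.
case: (boolP (w \in block i)) => wi.
  move: wi; rewrite /block imod !inE (negbTE wa) (negbTE wc) orbF => /eqP ->.
  have [/andP[/andP[_ nab] nba] /andP[/andP[_ nbc] ncb]] := missing_path_edges mp.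
  by rewrite (negbTE nab) (negbTE nba) (negbTE nbc) (negbTE ncb).
have [d hd wd] := KC_block_offset ik wH wi.
by apply: (same_side _ _ _ _ wd hd); rewrite /block /mid imod ?inE ?eqxx ?orbT.
Qed.

End DoubleCycle.

Theorem lemma4p8 (V : finType) (arc : rel V) (k : nat) (a b c : nat -> V) :
  tourn_missing_P2 arc ->
  double_cycle arc k a b c ->
  forall i, i < k ->
    let H := KC k a b c in
    outN_in arc H (a i) :\ c i = outN_in arc H (c i) :\ a i /\
    inN_in arc H (a i) :\ c i = inN_in arc H (c i) :\ a i.
Proof.
move=> [Ho _] DC i ik H.
split; apply/setP=> w; rewrite !in_setD1 !in_setI ?[w \in outN _ _]inE ?[w \in inN _ _]inE.
all: have [->|wa] := eqVneq w (a i); first by rewrite (negbTE (Ho.1 _)) !andbF.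
all: have [->|wc] := eqVneq w (c i); first by rewrite (negbTE (Ho.1 _)) !andbF.
all: case: (boolP (w \in H)) => wH //=.
all: by have [e1 e2] := ends_same_side Ho DC ik wH wa wc; rewrite ?e1 ?e2.
Qed.
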